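(* Let $n\geq1$ be an integer, let $R$ be a commutative ring in which $(n-1)!$ is invertible, and let $M$ be an $R$-module. Then the $R$-module $\Gamma^n_R(M)$ is generated by the pure symbols $[x]_n$, $x\in M$. Furthermore, for every submodule $N\subset M$, the kernel of the natural reduction $\rho:\Gamma^n_R(M)\to\Gamma^n_R(M/N)$ is generated (as an $R$-module) by the elements $[x+y]_n-[x]_n$ for $x\in M$ and $y\in N$.
   Context: $\Gamma^n_R(M)$ denotes the $n$-th divided power of the $R$-module $M$ (degree-$n$ part of the divided power algebra), with $[x]_n$ the $n$-th divided power of $x$. *)

From mathcomp Require Import all_boot all_order all_algebra.
Set Implicit Arguments.
Unset Strict Implicit.
Unset Printing Implicit Defensive.
Import GRing.Theory.
Local Open Scope ring_scope.

(* Divided power algebra Gamma_R(M), following Roby's presentation: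
   the commutative R-algebra generated by symbols x^[k] (x in M, k : nat)
   subject to
     x^[0] = 1,  (r x)^[k] = r^k x^[k],  x^[k] x^[l] = C(k+l,k) x^[k+l],
     (x+y)^[k] = sum_{i+j=k} x^[i] y^[j].
   Elements are represented by formal terms; equality in Gamma is the
   congruence [deq] generated by the commutative R-algebra axioms and the
   relations above.  To also represent Gamma_R(M/N) (M/N as the setoid M
   modulo N) the relation is parameterized by a predicate N and includes
   x^[k] = y^[k] whenever x - y \in N.  Gamma_R(M) is the case N = {0}. *)

Inductive dterm (R M : Type) : Type :=
| DGen of M & nat
| DZero
| DOne
| DAdd of dterm R M & dterm R M
| DOpp of dterm R M
| DMul of dterm R M & dterm R M
| DScale of R & dterm R M.

Arguments DZero {R M}.
Arguments DOne {R M}.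
Arguments DGen {R M}.
Arguments DAdd {R M}.
Arguments DOpp {R M}.
Arguments DMul {R M}.
Arguments DScale {R M}.

Definition dsum (R M : Type) (s : seq (dterm R M)) : dterm R M :=
  foldr (@DAdd R M) DZero s.

Section DP.
Variables (R : comPzRingType) (M : lmodType R) (N : M -> Prop).

Local Notation term := (dterm R M).

Inductive deq : term -> term -> Prop :=
| deq_refl t : deq t t
| deq_sym t u : deq t u -> deq u t
| deq_trans t u v : deq t u -> deq u v -> deq t v
| deq_add t t' u u' : deq t t' -> deq u u' -> deq (DAdd t u) (DAdd t' u')
| deq_opp t t' : deq t t' -> deq (DOpp t) (DOpp t')
| deq_mul t t' u u' : deq t t' -> deq u u' -> deq (DMul t u) (DMul t' u')
| deq_scale r t t' : deq t t' -> deq (DScale r t) (DScale r t')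
| deq_addA t u v : deq (DAdd t (DAdd u v)) (DAdd (DAdd t u) v)
| deq_addC t u : deq (DAdd t u) (DAdd u t)
| deq_add0 t : deq (DAdd DZero t) t
| deq_addN t : deq (DAdd (DOpp t) t) DZero
| deq_mulA t u v : deq (DMul t (DMul u v)) (DMul (DMul t u) v)
| deq_mulC t u : deq (DMul t u) (DMul u t)
| deq_mul1 t : deq (DMul DOne t) t
| deq_mulDl t u v : deq (DMul (DAdd t u) v) (DAdd (DMul t v) (DMul u v))
| deq_scaleA r s t : deq (DScale r (DScale s t)) (DScale (r * s) t)
| deq_scale1 t : deq (DScale 1 t) t
| deq_scaleDl r s t : deq (DScale (r + s) t) (DAdd (DScale r t) (DScale s t))
| deq_scaleDr r t u : deq (DScale r (DAdd t u)) (DAdd (DScale r t) (DScale r u))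
| deq_scaleMl r t u : deq (DScale r (DMul t u)) (DMul (DScale r t) u)
| deq_gen0 x : deq (DGen x 0) DOne
| deq_genZ r x k : deq (DGen (r *: x) k) (DScale (r ^+ k) (DGen x k))
| deq_genM x k l :
    deq (DMul (DGen x k) (DGen x l)) (DScale ('C(k + l, k))%:R (DGen x (k + l)))
| deq_genD x y k :
    deq (DGen (x + y) k)
        (dsum [seq DMul (DGen x i) (DGen y (k - i)) | i <- iota 0 k.+1])
| deq_genN x y k : N (x - y) -> deq (DGen x k) (DGen y k).

End DP.

Inductive dhom (R M : Type) : nat -> dterm R M -> Prop :=
| dhom_gen x k : dhom k (DGen x k)
| dhom_zero n : dhom n DZero
| dhom_one : dhom 0 DOne
| dhom_add n t u : dhom n t -> dhom n u -> dhom n (DAdd t u)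
| dhom_opp n t : dhom n t -> dhom n (DOpp t)
| dhom_mul n m t u : dhom n t -> dhom m u -> dhom (n + m) (DMul t u)
| dhom_scale n r t : dhom n t -> dhom n (DScale r t).

Definition gamma_eq (R : comPzRingType) (M : lmodType R) : dterm R M -> dterm R M -> Prop :=
  deq (fun x : M => x = 0).

(* Equality in Gamma_R(M/N), terms over M representing terms over M/N
   (the natural reduction rho is the identity on representing terms). *)
Definition gamma_quot_eq (R : comPzRingType) (M : lmodType R) (N : M -> Prop)
  : dterm R M -> dterm R M -> Prop := deq N.

Definition is_submodule (R : comPzRingType) (M : lmodType R) (N : M -> Prop) :=
  [/\ N 0, (forall x y, N x -> N y -> N (x + y)) & (forall (r : R) x, N x -> N (r *: x))].

(* Expanding [w + c z]_m = \sum_i c^i [w]_(m-i) [z]_i for c = 0, 1, 2, ... and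
   inverting the resulting Vandermonde system by finite differences divides only
   by 1, ..., m-1 once the top coefficient [z]_m is known.  Hence every product
   [x]_a [y]_b is an R-combination of pure powers [u]_(a+b), and so is every
   homogeneous element of degree n.  The kernel of the reduction is the ideal of
   Gamma_R(M) generated by the [x]_k - [y]_k with x - y in N.  Through the grading
   [x]_k |-> [x]_k X^k, its degree-n part is spanned by products
   v ([y + z]_k - [y]_k) with v of degree n - k and z in N; expanding
   [y + z]_k - [y]_k reduces these to terms [w]_(n-i) [z]_i with i > 0, and the
   same finite-difference argument applied to [w + c z]_n - [w]_n writes each of
   them as a combination of the generators [x + y]_n - [x]_n. *)

From HB Require Import structures.
From mathcomp Require Import all_boot all_order all_algebra zify.
From mathcomp Require boolp.
Import GRing.Theory.
Local Open Scope ring_scope.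
Set Implicit Arguments.
Unset Strict Implicit.
Unset Printing Implicit Defensive.

Section Evaluation.
Variables (R : comPzRingType) (M : lmodType R) (B : comPzRingType).
Variables (s : {rmorphism R -> B}) (f : M -> nat -> B).

Fixpoint deval (t : dterm R M) : B :=
  match t with
  | DGen x k => f x k
  | DZero => 0
  | DOne => 1
  | DAdd a b => deval a + deval b
  | DOpp a => - deval a
  | DMul a b => deval a * deval b
  | DScale r a => s r * deval a
  end.

Lemma deval_dsum (T : Type) (g : T -> dterm R M) r :
  deval (dsum (map g r)) = \sum_(i <- r) deval (g i).
Proof. by elim: r => [|a r IH]; rewrite ?big_nil // big_cons /= IH. Qed.

Variable N : M -> Prop.
Hypotheses (f0 : forall x, f x 0 = 1)
  (fZ : forall r x k, f (r *: x) k = s r ^+ k * f x k)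
  (fM : forall x k l, f x k * f x l = 'C(k + l, k)%:R * f x (k + l))
  (fD : forall x y k, f (x + y) k = \sum_(i < k.+1) f x i * f y (k - i))
  (fN : forall x y k, N (x - y) -> f x k = f y k).

Lemma deval_deq t u : deq N t u -> deval t = deval u.
Proof.
elim=> {t u}.
1-7: by move=> * /=; congruence.
- by move=> * /=; rewrite addrA.
- by move=> * /=; rewrite addrC.
- by move=> * /=; rewrite add0r.
- by move=> * /=; rewrite addNr.
- by move=> * /=; rewrite mulrA.
- by move=> * /=; rewrite mulrC.
- by move=> * /=; rewrite mul1r.
- by move=> * /=; rewrite mulrDl.
- by move=> r r' t /=; rewrite rmorphM mulrA.
- by move=> t /=; rewrite rmorph1 mul1r.
- by move=> r r' t /=; rewrite rmorphD mulrDl.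
- by move=> r t u /=; rewrite mulrDr.
- by move=> r t u /=; rewrite mulrA.
- exact: f0.
- by move=> r x k /=; rewrite fZ rmorphXn.
- by move=> x k l /=; rewrite fM rmorph_nat.
- move=> x y k; rewrite deval_dsum -[iota 0 k.+1]/(index_iota 0 k.+1) big_mkord.
  by rewrite [LHS]fD.
- exact: fN.
Qed.

End Evaluation.

(* Only used to see that Gamma_R(M) is a nonzero ring when R is one, so that
   polynomials over it are available. *)
Section Augmentation.
Variables (R : comPzRingType) (M : lmodType R).

Definition augmentation : dterm R M -> R := deval idfun (fun _ k => (k == 0)%:R).

Lemma augmentation_deq t u :
  deq (fun x : M => x = 0) t u -> augmentation t = augmentation u.
Proof.
apply: deval_deq => [//|r x [|k]|x [|k] [|l]|x y [|k]|] /=;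
  rewrite ?big_ord1 ?mulr1 ?mulr0 ?mul0r //.
by rewrite big_ord_recl big1 ?mulr0 ?addr0 // => i _; rewrite mul0r.
Qed.

End Augmentation.

Section FiniteDifferences.
Variable Q : comPzRingType.

Definition peval m (A : nat -> Q) (c : Q) := \sum_(i < m.+1) c ^+ i * A i.

Lemma pevalS m A c : peval m.+1 A c = peval m A c + c ^+ m.+1 * A m.+1.
Proof. by rewrite /peval big_ord_recr. Qed.

Lemma exprD1n_wide (c : Q) m (i : 'I_m) :
  (c + 1) ^+ i = \sum_(j < m) c ^+ j * 'C(i, j)%:R.
Proof.
rewrite exprD1n (big_ord_widen m (fun j => c ^+ j *+ 'C(i, j))) // big_mkcond /=.
apply: eq_bigr => j _; rewrite mulr_natr; case: ltnP => // ij.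
by rewrite bin_small.
Qed.

Lemma peval_difference m (A : nat -> Q) : exists B : nat -> Q,
  B m = m.+1%:R * A m.+1 /\
  forall c, peval m.+1 A (c + 1) - peval m.+1 A c = peval m B c.
Proof.
(* D j is the coefficient of c ^+ j in peval m.+1 A (c + 1). *)
pose D j := \sum_(i < m.+2) 'C(i, j)%:R * A i.
have D_top : D m.+1 = A m.+1.
  rewrite /D big_ord_recr /= binn mul1r big1 ?add0r // => i _.
  by rewrite bin_small ?mul0r.
exists (fun j => D j - A j); split.
  rewrite /D !big_ord_recr /= big1 => [|i _]; last by rewrite bin_small ?mul0r.
  by rewrite add0r binn binSn mul1r addrAC subrr add0r.
move=> c; rewrite /peval.
under eq_bigr => i _ do rewrite exprD1n_wide mulr_suml.
rewrite exchange_big /= -sumrB.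
rewrite (eq_bigr (fun j : 'I_m.+2 => c ^+ j * (D j - A j))) => [|j _].
  by rewrite big_ord_recr /= D_top subrr mulr0 addr0.
by rewrite mulrBr mulr_sumr; congr (_ - _); apply: eq_bigr => i _; rewrite mulrA.
Qed.

Variable V : Q -> Prop.
Hypotheses (V0 : V 0) (VB : forall a b, V a -> V b -> V (a - b)).

Let VN a : V a -> V (- a).
Proof. by rewrite -sub0r; apply: VB. Qed.

Let VD a b : V a -> V b -> V (a + b).
Proof. by move=> Va Vb; rewrite -[b]opprK; apply/VB/VN. Qed.

Let Vnat k a : V a -> V (k%:R * a).
Proof.
move=> Va; elim: k => [|k IH]; first by rewrite mul0r.
by rewrite mulrSr mulrDl mul1r; apply: VD.
Qed.

Lemma peval_drop_lead m A :
  (forall c : nat, V (peval m.+1 A c%:R)) -> V (A m.+1) ->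
  forall c : nat, V (peval m A c%:R).
Proof.
move=> VA Alead c; have := VB (VA c) (Vnat (c ^ m.+1) Alead).
by rewrite pevalS natrX addrK.
Qed.

(* By induction on m: the forward difference of peval m.+1 A has degree m and
   leading coefficient m.+1 * A m.+1. *)
Lemma coef_closed_of_peval m (A : nat -> Q) :
  (forall k a, (0 < k <= m)%N -> V (k%:R * a) -> V a) ->
  (forall c : nat, V (peval m A c%:R)) ->
  forall i, (i <= m)%N -> V (A i).
Proof.
elim: m A => [|m IH] A sat VA.
  by case=> // _; have := VA 0%N; rewrite /peval big_ord1 expr0 mul1r.
have [B [Bm dB]] := peval_difference m A.
have VdB c : V (peval m B c%:R) by rewrite -dB natr1; apply: VB.
have sat' k a : (0 < k <= m)%N -> V (k%:R * a) -> V a.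
  by case/andP=> k0 km; apply: sat; rewrite k0 (leq_trans km).
have Alead : V (A m.+1).
  by apply: (sat m.+1); rewrite ?leqnn // -Bm; exact: IH sat' VdB m (leqnn m).
move=> i; rewrite leq_eqVlt => /orP[/eqP -> // | ]; rewrite ltnS.
exact: IH sat' (peval_drop_lead VA Alead) i.
Qed.

Lemma coef_closed_of_peval_lead m (A : nat -> Q) :
  (forall k a, (0 < k < m)%N -> V (k%:R * a) -> V a) ->
  (forall c : nat, V (peval m A c%:R)) -> V (A m) ->
  forall i, (i <= m)%N -> V (A i).
Proof.
case: m => [|m] sat VA Alead i; first by rewrite leqn0 => /eqP ->.
rewrite leq_eqVlt => /orP[/eqP -> // | ]; rewrite ltnS.
exact: coef_closed_of_peval (peval_drop_lead VA Alead) i.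
Qed.

End FiniteDifferences.

Section Quotient.
Variables (R : comPzRingType) (M : lmodType R) (N : M -> Prop).
Local Notation term := (dterm R M).

Definition gamma := {A : term -> Prop | exists t, A = deq N t}.
Definition gclass (t : term) : gamma := exist _ (deq N t) (ex_intro _ t erefl).
Definition grepr (q : gamma) : term := sval (boolp.cid (proj2_sig q)).

Lemma gclass_eq t u : gclass t = gclass u <-> deq N t u.
Proof.
split=> [/(congr1 sval) /= e | tu].
  by rewrite e; apply: deq_refl.
apply: boolp.eq_exist; apply: boolp.funext => v; apply: boolp.propext.
by split=> [tv|uv]; [apply: deq_trans (deq_sym tu) tv | apply: deq_trans tu uv].
Qed.

Lemma greprK : cancel grepr gclass.
Proof.
by case=> A hA; apply/esym/boolp.eq_exist; exact: (proj2_sig (boolp.cid hA)).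
Qed.

Lemma gclass_ind (P : gamma -> Prop) : (forall t, P (gclass t)) -> forall q, P q.
Proof. by move=> Pt q; rewrite -(greprK q). Qed.

Lemma deq_grepr t : deq N (grepr (gclass t)) t.
Proof. by apply/gclass_eq; rewrite greprK. Qed.

HB.instance Definition _ := boolp.gen_eqMixin gamma.
HB.instance Definition _ := boolp.gen_choiceMixin gamma.

Definition gadd a b := gclass (DAdd (grepr a) (grepr b)).
Definition gopp a := gclass (DOpp (grepr a)).
Definition gmul a b := gclass (DMul (grepr a) (grepr b)).

Lemma gaddE t u : gadd (gclass t) (gclass u) = gclass (DAdd t u).
Proof. by apply/gclass_eq; apply: deq_add; apply: deq_grepr. Qed.
Lemma goppE t : gopp (gclass t) = gclass (DOpp t).
Proof. by apply/gclass_eq; apply: deq_opp; apply: deq_grepr. Qed.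
Lemma gmulE t u : gmul (gclass t) (gclass u) = gclass (DMul t u).
Proof. by apply/gclass_eq; apply: deq_mul; apply: deq_grepr. Qed.

Lemma gaddA : associative gadd.
Proof.
by do 3!elim/gclass_ind=> ?; rewrite !gaddE; apply/gclass_eq; apply: deq_addA.
Qed.
Lemma gaddC : commutative gadd.
Proof. by do 2!elim/gclass_ind=> ?; rewrite !gaddE; apply/gclass_eq; apply: deq_addC. Qed.
Lemma gadd0 : left_id (gclass DZero) gadd.
Proof. by elim/gclass_ind=> ?; rewrite gaddE; apply/gclass_eq; apply: deq_add0. Qed.
Lemma gaddN : left_inverse (gclass DZero) gopp gadd.
Proof. by elim/gclass_ind=> ?; rewrite goppE gaddE; apply/gclass_eq; apply: deq_addN. Qed.

HB.instance Definition _ := GRing.isZmodule.Build gamma gaddA gaddC gadd0 gaddN.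

Lemma gmulA : associative gmul.
Proof.
by do 3!elim/gclass_ind=> ?; rewrite !gmulE; apply/gclass_eq; apply: deq_mulA.
Qed.
Lemma gmulC : commutative gmul.
Proof. by do 2!elim/gclass_ind=> ?; rewrite !gmulE; apply/gclass_eq; apply: deq_mulC. Qed.
Lemma gmul1 : left_id (gclass DOne) gmul.
Proof. by elim/gclass_ind=> ?; rewrite gmulE; apply/gclass_eq; apply: deq_mul1. Qed.
Lemma gmulDl : left_distributive gmul gadd.
Proof.
by do 3!elim/gclass_ind=> ?; rewrite !(gmulE, gaddE); apply/gclass_eq; apply: deq_mulDl.
Qed.

HB.instance Definition _ := GRing.Zmodule_isComPzRing.Build gamma gmulA gmulC gmul1 gmulDl.

Lemma gclassD t u : gclass (DAdd t u) = gclass t + gclass u.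
Proof. exact/esym/gaddE. Qed.
Lemma gclassN t : gclass (DOpp t) = - gclass t.
Proof. exact/esym/goppE. Qed.
Lemma gclassM t u : gclass (DMul t u) = gclass t * gclass u.
Proof. exact/esym/gmulE. Qed.

Definition gscal (r : R) : gamma := gclass (DScale r DOne).

Lemma gclassZ r t : gclass (DScale r t) = gscal r * gclass t.
Proof.
rewrite -gclassM; apply/gclass_eq.
by apply: deq_trans (deq_scale _ (deq_sym (deq_mul1 _ _))) (deq_scaleMl _ _ _ _).
Qed.

Lemma gscalD r r' : gscal (r + r') = gscal r + gscal r'.
Proof. by rewrite -gclassD; apply/gclass_eq; apply: deq_scaleDl. Qed.

Lemma gscal_is_zmod_morphism : zmod_morphism gscal.
Proof. by move=> r r'; apply: (addIr (gscal r')); rewrite -gscalD !subrK. Qed.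

Lemma gscal_is_monoid_morphism : monoid_morphism gscal.
Proof.
split=> [|r r']; first by apply/gclass_eq; apply: deq_scale1.
by rewrite -gclassZ; apply/gclass_eq; apply/deq_sym/deq_scaleA.
Qed.

HB.instance Definition _ := GRing.isZmodMorphism.Build R gamma gscal gscal_is_zmod_morphism.
HB.instance Definition _ := GRing.isMonoidMorphism.Build R gamma gscal gscal_is_monoid_morphism.

Definition dp (x : M) (k : nat) : gamma := gclass (DGen x k).

Lemma gclassE t : gclass t = deval gscal dp t.
Proof.
elim: t => //= [a IHa b IHb|a IHa|a IHa b IHb|r a IHa].
- by rewrite gclassD IHa IHb.
- by rewrite gclassN IHa.
- by rewrite gclassM IHa IHb.
- by rewrite gclassZ IHa.
Qed.

Lemma gclass_deq t u : deq N t u -> gclass t = gclass u.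
Proof. exact: (gclass_eq t u).2. Qed.

Lemma dp0 x : dp x 0 = 1.
Proof. exact/gclass_deq/deq_gen0. Qed.

Lemma dpZ r x k : dp (r *: x) k = gscal r ^+ k * dp x k.
Proof. by rewrite /dp (gclass_deq (deq_genZ _ _ _ _)) gclassE /= rmorphXn. Qed.

Lemma dpM x k l : dp x k * dp x l = 'C(k + l, k)%:R * dp x (k + l).
Proof.
by rewrite -gclassM (gclass_deq (deq_genM _ _ _ _)) gclassE /= rmorph_nat.
Qed.

Lemma dpD x y k : dp (x + y) k = \sum_(i < k.+1) dp x i * dp y (k - i).
Proof.
rewrite /dp (gclass_deq (deq_genD _ _ _ _)) gclassE deval_dsum.
by rewrite -[iota 0 k.+1]/(index_iota 0 k.+1) big_mkord.
Qed.

Lemma dpN x y k : N (x - y) -> dp x k = dp y k.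
Proof. by move=> xy; apply/gclass_deq/deq_genN. Qed.

Lemma dp_zero k : (0 < k)%N -> dp 0 k = 0.
Proof. by move=> k_gt0; rewrite -(scale0r (0 : M)) dpZ rmorph0 expr0n gtn_eqF // mul0r. Qed.

Lemma dp_addZn w z m (c : nat) :
  dp (w + c%:R *: z) m = peval m (fun i => dp w (m - i) * dp z i) c%:R.
Proof.
rewrite dpD /peval (reindex_inj rev_ord_inj) /=; apply: eq_bigr => i _.
rewrite dpZ rmorph_nat subSS subKn; [exact: mulrCA | by rewrite -ltnS].
Qed.

End Quotient.

Section Invertibility.
Variable R : comPzRingType.

Definition invertible_below (m : nat) :=
  forall k, (0 < k < m)%N -> exists r : R, r * k%:R = 1.

Lemma invertible_below_le m m' : (m' <= m)%N -> invertible_below m -> invertible_below m'.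
Proof. by move=> le_m inv_m k /andP[k0 km]; apply: inv_m; rewrite k0 (leq_trans km). Qed.

Lemma invertible_below_fact n :
  (exists u : R, u * (n.-1)`!%:R = 1) -> invertible_below n.
Proof.
case=> u u_fact k /andP[k_gt0 k_lt]; have /dvdnP[q fact_q] : (k %| (n.-1)`!)%N.
  by apply: dvdn_fact; lia.
by exists (u * q%:R); rewrite -mulrA -natrM -fact_q.
Qed.

End Invertibility.

Section Span.
Variables (R B : comPzRingType) (s : {rmorphism R -> B}).

Inductive rspan (P : B -> Prop) : B -> Prop :=
| rspan0 : rspan P 0
| rspanD a b : rspan P a -> rspan P b -> rspan P (a + b)
| rspanZ r g : P g -> rspan P (s r * g).

Implicit Types P : B -> Prop.

Lemma rspan_gen P g : P g -> rspan P g.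
Proof. by move=> Pg; rewrite -[g]mul1r -(rmorph1 s); apply: rspanZ. Qed.

Lemma rspan_scale P r a : rspan P a -> rspan P (s r * a).
Proof.
elim=> [|b c _ Pb _ Pc|r' g Pg]; first by rewrite mulr0; apply: rspan0.
  by rewrite mulrDr; apply: rspanD.
by rewrite mulrA -rmorphM; apply: rspanZ.
Qed.

Lemma rspanB P a b : rspan P a -> rspan P b -> rspan P (a - b).
Proof.
move=> Pa Pb; apply: rspanD => //.
by rewrite -mulN1r -(rmorph1 s) -rmorphN; apply: rspan_scale.
Qed.

Lemma rspan_sum P I r (Q : pred I) (F : I -> B) :
  (forall i, Q i -> rspan P (F i)) -> rspan P (\sum_(i <- r | Q i) F i).
Proof. by move=> PF; apply: (big_ind (rspan P)) => //; [apply: rspan0 | apply: rspanD]. Qed.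

Lemma rspan_natK P k a : (exists r : R, r * k%:R = 1) -> rspan P (k%:R * a) -> rspan P a.
Proof.
by case=> r rk /(rspan_scale r); rewrite mulrA -(rmorph_nat s) -rmorphM rk rmorph1 mul1r.
Qed.

Lemma rspan_mulr_closed P P' h a :
  (forall g, P g -> rspan P' (g * h)) -> rspan P a -> rspan P' (a * h).
Proof.
move=> Ph; elim=> [|b c _ Pb _ Pc|r g Pg]; first by rewrite mul0r; apply: rspan0.
  by rewrite mulrDl; apply: rspanD.
by rewrite -mulrA; apply/rspan_scale/Ph.
Qed.

End Span.

Section Grading.
Variables (R : comPzRingType) (M : lmodType R).
Hypothesis R_nontrivial : (1 : R) != 0.
Local Notation N0 := (fun x : M => x = 0).

Definition Gamma0 := gamma N0.

Lemma Gamma0_nontrivial : (1 : Gamma0) != 0.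
Proof.
by apply/negP => /eqP /gclass_eq /augmentation_deq /= /eqP; apply/negP.
Qed.

HB.instance Definition _ := GRing.ComPzRing.on Gamma0.
HB.instance Definition _ := GRing.PzSemiRing_isNonZero.Build Gamma0 Gamma0_nontrivial.

Local Notation gcl t := (gclass N0 t : Gamma0).
Local Notation "[ x ]_ k" := (dp N0 x k : Gamma0) (at level 0, format "[ x ]_ k").
Local Notation span := (@rspan R Gamma0 (gscal N0)).

Definition pure k (g : Gamma0) := exists x, g = [x]_k.

Lemma pure_mul a b x y :
  invertible_below R (a + b) -> span (pure (a + b)) ([x]_a * [y]_b).
Proof.
(* [y + c x]_(a+b) = peval (a + b) A c%:R and [y]_b [x]_a = A a for the A below. *)
move=> inv_ab; rewrite mulrC -{2}(addKn a b).
apply: (coef_closed_of_peval_lead (@rspan0 _ _ _ _) (@rspanB _ _ _ _)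
          (A := fun i => [y]_(a + b - i) * [x]_i)); last exact: leq_addr.
- by move=> k g /inv_ab; apply: rspan_natK.
- by move=> c; rewrite -dp_addZn; apply: rspan_gen; eexists.
- by rewrite subnn dp0 mul1r; apply: rspan_gen; eexists.
Qed.

(* The coefficient of 'X^j in grade_term t is the degree-j component of t. *)
Definition grade_term : dterm R M -> {poly Gamma0} :=
  deval (polyC \o (gscal N0 : R -> Gamma0)) (fun x k => [x]_k *: 'X^k).

Lemma grade_term_deq t u : deq N0 t u -> grade_term t = grade_term u.
Proof.
apply: deval_deq => [x|r x k|x k l|x y k|x y k /eqP].
- by rewrite dp0 expr0 scale1r.
- by rewrite dpZ /= -polyC_exp mul_polyC scalerA.
- by rewrite -scalerAl -scalerAr scalerA -exprD dpM -polyC_natr mul_polyC scalerA.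
- rewrite dpD scaler_suml; apply: eq_bigr => i _.
  by rewrite -scalerAl -scalerAr scalerA -exprD subnKC // -ltnS.
- by rewrite subr_eq0 => /eqP ->.
Qed.

Definition grade (q : Gamma0) : {poly Gamma0} := grade_term (grepr q).

Lemma gradeE t : grade (gcl t) = grade_term t.
Proof. exact/grade_term_deq/deq_grepr. Qed.

Lemma grade_is_zmod_morphism : zmod_morphism grade.
Proof. by do 2!elim/gclass_ind=> ?; rewrite -gclassN -gclassD !gradeE. Qed.

Lemma grade_is_monoid_morphism : monoid_morphism grade.
Proof.
split=> [|]; first exact: gradeE.
by do 2!elim/gclass_ind=> ?; rewrite -gclassM !gradeE.
Qed.

HB.instance Definition _ :=
  GRing.isZmodMorphism.Build Gamma0 {poly Gamma0} grade grade_is_zmod_morphism.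
HB.instance Definition _ :=
  GRing.isMonoidMorphism.Build Gamma0 {poly Gamma0} grade grade_is_monoid_morphism.

Lemma grade_term_dhom n t : dhom n t -> grade_term t = gcl t *: 'X^n.
Proof.
elim=> {n t} /=.
- by [].
- by move=> n; rewrite scale0r.
- by rewrite expr0 scale1r.
- by move=> n t u _ -> _ ->; rewrite gclassD scalerDl.
- by move=> n t _ ->; rewrite gclassN scaleNr.
- by move=> n m t u _ -> _ ->; rewrite gclassM -scalerAl -scalerAr scalerA exprD.
- by move=> n r t _ ->; rewrite gclassZ mul_polyC scalerA.
Qed.

Lemma span_pure_mul a b p q : invertible_below R (a + b) ->
  span (pure a) p -> span (pure b) q -> span (pure (a + b)) (p * q).
Proof.
move=> inv_ab Pp Pq; apply: rspan_mulr_closed Pp => _ [x ->].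
rewrite mulrC; apply: rspan_mulr_closed Pq => _ [y ->].
by rewrite mulrC; apply: pure_mul.
Qed.

Lemma coef_grade_term t j : invertible_below R j -> span (pure j) ((grade_term t)`_j).
Proof.
elim: t j => [x k|||a IHa b IHb|a IHa|a IHa b IHb|r a IHa] j inv_j /=.
- rewrite coefZ coefXn; case: eqP => [->|_]; last by rewrite mulr0; apply: rspan0.
  by rewrite mulr1; apply: rspan_gen; eexists.
- by rewrite coef0; apply: rspan0.
- rewrite coef1; case: eqP => [->|_]; last exact: rspan0.
  by apply: rspan_gen; exists 0; rewrite dp0.
- by rewrite coefD; apply: rspanD; [apply: IHa | apply: IHb].
- by rewrite coefN -sub0r; apply: rspanB; [apply: rspan0 | apply: IHa].
- rewrite coefM; apply: rspan_sum => i _; have ij : (i <= j)%N by rewrite -ltnS.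
  rewrite -[in pure j](subnKC ij); apply: span_pure_mul; rewrite ?subnKC //.
    by apply: IHa; apply: invertible_below_le inv_j.
  by apply: IHb; apply: invertible_below_le inv_j; rewrite leq_subr.
- by rewrite coefCM; apply/rspan_scale/IHa.
Qed.

Lemma span_pure_of_dhom n t :
  invertible_below R n -> dhom n t -> span (pure n) (gcl t).
Proof.
move=> inv_n ht; have := coef_grade_term t inv_n.
by rewrite (grade_term_dhom ht) coefZ coefXn eqxx mulr1.
Qed.

Lemma span_pure_dsum n q : span (pure n) q ->
  exists s : seq (R * M), q = gcl (dsum [seq DScale p.1 (DGen p.2 n) | p <- s]).
Proof.
elim=> [|a b _ [s1 ->] _ [s2 ->]|r g [x ->]]; first by exists [::].
  by exists (s1 ++ s2); rewrite !gclassE !deval_dsum big_cat.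
by exists [:: (r, x)]; rewrite gclassE deval_dsum big_seq1.
Qed.

Section Kernel.
Variables (N : M -> Prop) (n : nat).
Hypotheses (N_sub : is_submodule N) (n_gt0 : (0 < n)%N) (inv_n : invertible_below R n).

Definition kernel_gen (g : Gamma0) := exists x y, N y /\ g = [x + y]_n - [x]_n.

Lemma kernel_gen_dp_mul w z i :
  N z -> (0 < i <= n)%N -> span kernel_gen ([w]_(n - i) * [z]_i).
Proof.
move=> Nz /andP[i_gt0 i_le].
(* peval n A c%:R = [w + c z]_n - [w]_n *)
pose A i := if i == 0%N then 0 else [w]_(n - i) * [z]_i.
have -> : [w]_(n - i) * [z]_i = A i by rewrite /A gtn_eqF.
apply: (coef_closed_of_peval_lead (@rspan0 _ _ _ _) (@rspanB _ _ _ _)) i_le.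
- by move=> k g /inv_n; apply: rspan_natK.
- move=> c; apply: rspan_gen; exists w, (c%:R *: z).
  split; first by case: N_sub => _ _; apply.
  rewrite dp_addZn /peval !big_ord_recl /= subn0 dp0 expr0 !mul1r mulr1.
  by rewrite /A eqxx add0r addrAC subrr add0r.
- rewrite /A gtn_eqF // subnn dp0 mul1r; apply: rspan_gen; exists 0, z.
  by rewrite add0r dp_zero // subr0; case: N_sub.
Qed.

Lemma kernel_gen_diff_mul j k x y v : (j + k = n)%N -> N (x - y) ->
  span (pure j) v -> span kernel_gen (([x]_k - [y]_k) * v).
Proof.
move=> jk Nxy Pv; have -> : x = y + (x - y) by rewrite addrC subrK.
rewrite dpD big_ord_recr /= subnn dp0 mulr1 addrK mulrC mulr_sumr.
apply: rspan_sum => i _; rewrite mulrA.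
have ik : (i < k)%N := ltn_ord i.
apply: (rspan_mulr_closed (P := pure (n - (k - i)))) => [_ [w ->]|].
  by apply: kernel_gen_dp_mul => //; lia.
have -> : (n - (k - i) = j + i)%N by lia.
apply: span_pure_mul => //; last by apply: rspan_gen; eexists.
by apply: invertible_below_le inv_n; lia.
Qed.

Inductive kernel_ideal : Gamma0 -> Prop :=
| kernel_ideal0 : kernel_ideal 0
| kernel_idealD p q : kernel_ideal p -> kernel_ideal q -> kernel_ideal (p + q)
| kernel_ideal_gen a x y k : N (x - y) -> kernel_ideal (a * ([x]_k - [y]_k)).

Lemma kernel_idealMl b p : kernel_ideal p -> kernel_ideal (b * p).
Proof.
elim=> {p} [|p q _ Ip _ Iq|a x y k Nxy]; first by rewrite mulr0; apply: kernel_ideal0.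
  by rewrite mulrDr; apply: kernel_idealD.
by rewrite mulrA; apply: kernel_ideal_gen.
Qed.

Lemma kernel_ideal_deq t u : deq N t u -> kernel_ideal (gcl t - gcl u).
Proof.
have kernel_ideal_deq0 t' u' : deq N0 t' u' -> kernel_ideal (gcl t' - gcl u').
  by move/gclass_deq ->; rewrite subrr; apply: kernel_ideal0.
elim=> {t u}; try by move=> *; apply: kernel_ideal_deq0; constructor.
- by move=> t u _ Itu; rewrite -opprB -mulN1r; apply: kernel_idealMl.
- move=> t u v _ Itu _ Iuv.
  by rewrite -[gcl t](subrK (gcl u)) -addrA; apply: kernel_idealD.
- by move=> t t' u u' _ It _ Iu; rewrite !gclassD opprD addrACA; apply: kernel_idealD.
- by move=> t t' _ It; rewrite !gclassN -opprD -mulN1r; apply: kernel_idealMl.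
- move=> t t' u u' _ It _ Iu; rewrite !gclassM.
  rewrite -[gcl t * _](subrK (gcl t' * gcl u)) -addrA -mulrBl -mulrBr.
  by apply: kernel_idealD; [rewrite mulrC|]; apply: kernel_idealMl.
- by move=> r t t' _ It; rewrite !gclassZ -mulrBr; apply: kernel_idealMl.
- by move=> x y k Nxy; rewrite -[X in kernel_ideal X]mul1r; apply: kernel_ideal_gen.
Qed.

Lemma coef_grade_kernel_ideal q : kernel_ideal q -> span kernel_gen ((grade q)`_n).
Proof.
elim=> {q} [|p q _ Ip _ Iq|a x y k Nxy].
- by rewrite rmorph0 coef0; apply: rspan0.
- by rewrite rmorphD coefD; apply: rspanD.
rewrite rmorphM rmorphB /= !gradeE /= -scalerBl -scalerAr coefZ coefMXn.
case: ltnP => kn; first by rewrite mulr0; apply: rspan0.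
apply: (kernel_gen_diff_mul (j := n - k)); rewrite ?subnK //.
by apply/coef_grade_term/(invertible_below_le (leq_subr _ _)).
Qed.

Lemma span_kernel_gen_of_deq0 t : dhom n t -> deq N t DZero -> span kernel_gen (gcl t).
Proof.
move=> ht /kernel_ideal_deq; rewrite subr0 => /coef_grade_kernel_ideal.
by rewrite gradeE (grade_term_dhom ht) coefZ coefXn eqxx mulr1.
Qed.

Lemma span_kernel_gen_dsum q : span kernel_gen q ->
  exists s : seq (R * M * M), (forall p, p \in s -> N p.2) /\
    q = gcl (dsum [seq DScale p.1.1 (DAdd (DGen (p.1.2 + p.2) n) (DOpp (DGen p.1.2 n)))
                  | p <- s]).
Proof.
elim=> [|a b _ [s1 [Ns1 ->]] _ [s2 [Ns2 ->]]|r g [x [y [Ny ->]]]].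
- by exists [::].
- exists (s1 ++ s2); rewrite !gclassE !deval_dsum big_cat; split=> // p.
  by rewrite mem_cat => /orP[/Ns1|/Ns2].
- exists [:: (r, x, y)]; rewrite gclassE deval_dsum big_seq1.
  by split=> // p; rewrite inE => /eqP ->.
Qed.

End Kernel.

End Grading.

Section Congruence.
Variables (R : comPzRingType) (M : lmodType R).
Implicit Types (t u : dterm R M) (N : M -> Prop).

Lemma deq_mono N1 N2 t u : (forall x, N1 x -> N2 x) -> deq N1 t u -> deq N2 t u.
Proof.
move=> sub; elim=> {t u}; try by move=> *; constructor.
- by move=> t u v _ tu _ uv; apply: deq_trans tu uv.
- by move=> x y k /sub; apply: deq_genN.
Qed.

Lemma deq_trivial N t u : (1 : R) = 0 -> deq N t u.
Proof.
move=> R0; apply/gclass_eq.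
suff gclass0 v : gclass N v = 0 by rewrite !gclass0.
by rewrite -[gclass N v]mul1r -(rmorph1 (gscal N)) R0 rmorph0 mul0r.
Qed.

Lemma deq0_of_kernel_sum N n t (s : seq (R * M * M)) :
  is_submodule N -> (forall p, p \in s -> N p.2) ->
  gamma_eq t (dsum [seq DScale p.1.1 (DAdd (DGen (p.1.2 + p.2) n) (DOpp (DGen p.1.2 n)))
                   | p <- s]) ->
  deq N t DZero.
Proof.
case=> N0 _ _ Ns /(deq_mono (N2 := N)) ts.
apply/gclass_eq; rewrite (gclass_deq (ts _)) => [|_ -> //].
rewrite gclassE deval_dsum big1_seq // => -[[r x] y] /andP[_ /Ns /= Ny].
by rewrite (dpN _ (_ : N (x + y - x))) ?subrr ?mulr0 // addrC addKr.
Qed.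

End Congruence.

Theorem lemma6p1 (R : comPzRingType) (M : lmodType R) (n : nat) :
  (0 < n)%N ->
  (exists u : R, u * ((n.-1)`!)%:R = 1) ->
  (forall t : dterm R M, dhom n t ->
     exists s : seq (R * M),
       gamma_eq t (dsum [seq DScale p.1 (DGen p.2 n) | p <- s])) /\
  (forall N : M -> Prop, is_submodule N ->
     forall t : dterm R M, dhom n t ->
       (gamma_quot_eq N t DZero <->
        exists s : seq (R * M * M),
          (forall p, p \in s -> N p.2) /\
          gamma_eq t (dsum [seq DScale p.1.1
                                  (DAdd (DGen (p.1.2 + p.2) n) (DOpp (DGen p.1.2 n)))
                           | p <- s]))).
Proof.
move=> n_gt0 /invertible_below_fact inv_n.
have [R0 | R_nontrivial] := eqVneq (1 : R) 0.
  split=> [t _ | N N_sub t _]; first by exists [::]; apply: deq_trivial.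
  split=> [_ | [s [Ns ts]]]; last exact: deq0_of_kernel_sum N_sub Ns ts.
  by exists [::]; split=> //; apply: deq_trivial.
split=> [t ht | N N_sub t ht].
  have [s e] := span_pure_dsum (span_pure_of_dhom R_nontrivial inv_n ht).
  by exists s; apply/gclass_eq.
split=> [/(span_kernel_gen_of_deq0 R_nontrivial N_sub n_gt0 inv_n ht) | [s [Ns ts]]].
  by case/span_kernel_gen_dsum => s [Ns e]; exists s; split=> //; apply/gclass_eq.
exact: deq0_of_kernel_sum N_sub Ns ts.
Qed.
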